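(* Let $G$ be a group and $H\le G$ a subnormal subgroup of finite index. If $q$ is a prime dividing $[G:H]$, then there exists $g\in G$ with $\mathrm{ord}_H(g)=q$.
   Context: $H$ is subnormal in $G$ if there is a chain $H=H_0\le H_1\le\dots\le H_m=G$ with each $H_j$ normal in $H_{j+1}$. For $g\in G$, the relative order is $\mathrm{ord}_H(g)=\min\{n>0\mid g^n\in H\}$. *)

From mathcomp Require Import all_boot.
Set Implicit Arguments. Unset Strict Implicit. Unset Printing Implicit Defensive.

Record group := Group {
  carrier :> Type;
  gmul : carrier -> carrier -> carrier;
  gone : carrier;
  ginv : carrier -> carrier;
  gmulA : forall x y z, gmul x (gmul y z) = gmul (gmul x y) z;
  gmul1 : forall x, gmul gone x = x;
  gmulV : forall x, gmul (ginv x) x = gone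
}.

Fixpoint gpow (G : group) (x : G) (n : nat) : G :=
  match n with 0 => gone G | S k => gmul x (gpow x k) end.

Definition is_subgroup (G : group) (H : G -> Prop) : Prop :=
  H (gone G) /\ (forall x y, H x -> H y -> H (gmul x y)) /\ (forall x, H x -> H (ginv x)).

Definition normal_in (G : group) (K L : G -> Prop) : Prop :=
  is_subgroup K /\ is_subgroup L /\ (forall x, K x -> L x) /\
  (forall l k, L l -> K k -> K (gmul (ginv l) (gmul k l))).

Inductive subnormal (G : group) : (G -> Prop) -> Prop :=
  | subnormal_top : forall H : G -> Prop, (forall x, H x) -> subnormal H
  | subnormal_step : forall H K : G -> Prop,
      normal_in H K -> subnormal K -> subnormal H.

(* [G : H] = n : there is a left transversal of H in G with n elements,
   i.e. G is the disjoint union of the n left cosets (r i) H. *)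
Definition has_index (G : group) (H : G -> Prop) (n : nat) : Prop :=
  exists r : 'I_n -> G, forall g : G, exists! i : 'I_n, H (gmul (ginv (r i)) g).

Definition rel_order_is (G : group) (H : G -> Prop) (g : G) (n : nat) : Prop :=
  0 < n /\ H (gpow g n) /\ (forall m, 0 < m -> m < n -> ~ H (gpow g m)).

From Pilot Require Import Defs.
From mathcomp Require Import all_boot all_fingroup all_solvable.
From mathcomp Require Import boolp.
Set Implicit Arguments. Unset Strict Implicit. Unset Printing Implicit Defensive.

(* Let G act on the n left cosets of H.  Its image Q is a finite permutation
   group and the point stabilizer T of the coset H has index n in Q, with
   g^m in H iff the image of g^m lies in T; so it suffices to find x in Q with
   x^q in T and x^m not in T for 0 < m < q.  A Sylow q-subgroup P of Q is not
   contained in T, since [Q : T] divides the q'-number [Q : P].  For a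
   q-element y of P outside T, let q^j be the least power of q with y^(q^j) in
   T; then x = y^(q^(j-1)) works: if also x^m were in T with 0 < m < q, a
   Bezout relation between m and q would put x itself in T. *)

Section PrimeRelativeOrder.
Local Open Scope group_scope.
Variables (gT : finGroupType) (T : {group gT}) (q : nat).
Hypothesis q_pr : prime q.

Lemma expg_notin_lt_prime x m :
  x \notin T -> x ^+ q \in T -> (0 < m < q)%N -> x ^+ m \notin T.
Proof.
move=> xT xqT /andP[m_gt0 m_lt_q]; apply: contra xT => xmT.
have co_qm : coprime q m by rewrite prime_coprime // gtnNdvd.
have [u _] := Bezoutl m (prime_gt0 q_pr); rewrite (eqnP co_qm).
move=> /dvdnP[c def_qc].
have : x ^+ (c * q) \in T by rewrite mulnC expgM groupX.
by rewrite -def_qc expgD expg1 groupMr // mulnC expgM groupX.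
Qed.

Lemma exists_prime_root_notin y : q.-elt y -> y \notin T ->
  exists x, [/\ x \in <[y]>, x \notin T & x ^+ q \in T].
Proof.
move=> q_y yT; have [e def_ord] := p_natP q_y.
have ex_j : exists j, y ^+ (q ^ j) \in T by exists e; rewrite -def_ord expg_order.
have [j yqjT min_j] := ex_minnP ex_j.
have j_gt0 : (0 < j)%N by case: j yqjT {min_j} => //; rewrite expg1 (negbTE yT).
exists (y ^+ (q ^ j.-1)); split; first exact: mem_cycle.
  by apply/negP => /min_j; rewrite leqNgt ltn_predL j_gt0.
by rewrite -expgM -expnSr prednK.
Qed.

Lemma Sylow_not_subset (Q P : {group gT}) :
  T \subset Q -> q %| #|Q : T| -> q.-Sylow(Q) P -> ~~ (P \subset T).
Proof.
move=> sTQ q_dv_iQT sylP; apply/negP => sPT.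
have /and3P[_ _ q'_iQP] := sylP.
have : q^'.-nat #|Q : T|.
  by apply: pnat_dvd q'_iQP; rewrite -(Lagrange_index sTQ sPT) dvdn_mulr.
by rewrite p'natE // q_dv_iQT.
Qed.

Lemma exists_prime_rel_order (Q : {group gT}) :
  T \subset Q -> q %| #|Q : T| ->
  exists2 x, x \in Q & x ^+ q \in T /\ forall m, (0 < m < q)%N -> x ^+ m \notin T.
Proof.
move=> sTQ q_dv_iQT; have [P sylP] := Sylow_exists q Q.
have [y yP yT] := subsetPn (Sylow_not_subset sTQ q_dv_iQT sylP).
have [x [xy xT xqT]] := exists_prime_root_notin (mem_p_elt (pHall_pgroup sylP) yP) yT.
exists x; first by apply: subsetP xy; rewrite cycle_subG (subsetP (pHall_sub sylP)).
by split=> // m; apply: expg_notin_lt_prime.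
Qed.
End PrimeRelativeOrder.

Section GroupLaws.
Variable G : Defs.group.
Local Notation "x * y" := (gmul x y).
Local Notation "1" := (gone G).
Local Notation "x ^-1" := (ginv x).

Lemma gmulKV (x y : G) : x^-1 * (x * y) = y.
Proof. by rewrite gmulA gmulV gmul1. Qed.

Lemma gmulVr (x : G) : x * x^-1 = 1.
Proof. by rewrite -[LHS](gmulKV x^-1) (gmulKV x) gmulV. Qed.

Lemma gmul1r (x : G) : x * 1 = x.
Proof. by rewrite -(gmulV x) gmulA gmulVr gmul1. Qed.

Lemma ginv_unique (x y : G) : x * y = 1 -> y = x^-1.
Proof. by move=> xy1; rewrite -[y](gmulKV x) xy1 gmul1r. Qed.

Lemma ginvK (x : G) : (x^-1)^-1 = x.
Proof. by rewrite -(ginv_unique (gmulV x)). Qed.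

Lemma gmulVK (x y : G) : x * (x^-1 * y) = y.
Proof. by rewrite -{1}(ginvK x) gmulKV. Qed.

Lemma ginvM (x y : G) : (x * y)^-1 = y^-1 * x^-1.
Proof. by apply/esym/ginv_unique; rewrite -gmulA gmulVK gmulVr. Qed.
End GroupLaws.

Section CosetPermutation.
Variables (G : Defs.group) (H : G -> Prop) (n : nat) (r : 'I_n -> G).
Hypothesis H_subgroup : is_subgroup H.
Hypothesis r_transversal : forall g : G, exists! i : 'I_n, H (gmul (ginv (r i)) g).
Local Notation "x * y" := (gmul x y).
Local Notation "1" := (gone G).
Local Notation "x ^-1" := (ginv x).

Let Hone : H 1. Proof. by case: H_subgroup. Qed.
Let Hmul x y : H x -> H y -> H (x * y). Proof. by case: H_subgroup => _ [mulH _]; apply: mulH. Qed.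
Let Hinv x : H x -> H x^-1. Proof. by case: H_subgroup => _ [_ invH]; apply: invH. Qed.

Definition coset_idx (g : G) : 'I_n := proj1_sig (cid (r_transversal g)).

Lemma coset_idxP g : H ((r (coset_idx g))^-1 * g).
Proof. by rewrite /coset_idx; case: (cid (r_transversal g)) => i []. Qed.

Lemma coset_idx_uniq g i : H ((r i)^-1 * g) -> coset_idx g = i.
Proof. by rewrite /coset_idx; case: (cid (r_transversal g)) => j [_ uniq_j] /= /uniq_j. Qed.

Lemma eq_coset_idx a b : coset_idx a = coset_idx b <-> H (a^-1 * b).
Proof.
split=> [eq_ab | Hab].
  have := Hmul (Hinv (coset_idxP a)) (coset_idxP b).
  by rewrite eq_ab ginvM ginvK -gmulA gmulVK.
apply/esym/coset_idx_uniq; have := Hmul (coset_idxP a) Hab.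
by rewrite -gmulA gmulVK.
Qed.

Lemma coset_idx_transversal i : coset_idx (r i) = i.
Proof. by apply: coset_idx_uniq; rewrite gmulV. Qed.

Definition coset_act (g : G) (i : 'I_n) : 'I_n := coset_idx (g^-1 * r i).

Lemma coset_act_idx g a : coset_act g (coset_idx a) = coset_idx (g^-1 * a).
Proof.
by apply/eq_coset_idx; rewrite ginvM ginvK -gmulA gmulVK; apply: coset_idxP.
Qed.

Lemma coset_act_inj g : injective (coset_act g).
Proof.
move=> i j /eq_coset_idx; rewrite ginvM ginvK -gmulA gmulVK.
by move/eq_coset_idx; rewrite !coset_idx_transversal.
Qed.

Definition coset_perm (g : G) : {perm 'I_n} := perm (@coset_act_inj g).

Lemma coset_permE g a : coset_perm g (coset_idx a) = coset_idx (g^-1 * a).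
Proof. by rewrite permE coset_act_idx. Qed.

Lemma coset_permM g h : coset_perm (g * h) = (coset_perm g * coset_perm h)%g.
Proof.
apply/permP => i; rewrite permM -(coset_idx_transversal i) !coset_permE.
by rewrite ginvM gmulA.
Qed.

Lemma coset_perm1 : coset_perm 1 = 1%g.
Proof.
apply/permP => i; rewrite perm1 -{1}(coset_idx_transversal i) coset_permE.
by rewrite -(ginv_unique (gmul1 1)) gmul1 coset_idx_transversal.
Qed.

Lemma coset_permX g m : coset_perm (gpow g m) = (coset_perm g ^+ m)%g.
Proof. by elim: m => [|m IHm] /=; rewrite ?coset_perm1 // coset_permM IHm expgS. Qed.

Lemma coset_perm_fix g : coset_perm g (coset_idx 1) = coset_idx 1 <-> H g.
Proof. by rewrite coset_permE gmul1r eq_coset_idx ginvK gmul1r. Qed.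

Definition coset_image : {set {perm 'I_n}} :=
  [set p | `[< exists g, coset_perm g = p >]].

Lemma coset_imageP p : reflect (exists g, coset_perm g = p) (p \in coset_image).
Proof. by rewrite inE; apply: asboolP. Qed.

Lemma coset_image_group_set : group_set coset_image.
Proof.
apply/group_setP; split; first by apply/coset_imageP; exists 1; rewrite coset_perm1.
move=> _ _ /coset_imageP[g <-] /coset_imageP[h <-].
by apply/coset_imageP; exists (g * h); rewrite coset_permM.
Qed.

Canonical coset_image_group := Group coset_image_group_set.

Definition coset_stabilizer : {group {perm 'I_n}} :=
  ('C_coset_image[coset_idx (gone G) | 'P])%G.

Lemma coset_stabilizerP g : coset_perm g \in coset_stabilizer <-> H g.
Proof.
rewrite inE (_ : coset_perm g \in _); last by apply/coset_imageP; exists g.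
by rewrite -coset_perm_fix; split=> [/astab1P // | fix_g]; apply/astab1P.
Qed.

Lemma index_coset_stabilizer : #|coset_image : coset_stabilizer|%g = n.
Proof.
rewrite -card_orbit -[RHS]card_ord -cardsT; apply: eq_card => i.
rewrite inE; apply/orbitP; exists (coset_perm (r i)^-1).
  by apply/coset_imageP; exists (r i)^-1.
by rewrite /= apermE coset_permE ginvK gmul1r coset_idx_transversal.
Qed.

End CosetPermutation.

Theorem mainTheorem11 (G : Defs.group) (H : G -> Prop) (n q : nat) :
  is_subgroup H -> Defs.subnormal H -> has_index H n ->
  prime q -> q %| n ->
  exists g : G, rel_order_is H g q.
Proof.
move=> H_subgroup _ [r r_transversal] q_pr q_dvd_n.
have memT := coset_stabilizerP H_subgroup r_transversal.
have permX := coset_permX H_subgroup r_transversal.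
have sTQ : coset_stabilizer H_subgroup r_transversal \subset coset_image H_subgroup r_transversal.
  exact: subsetIl.
have [|_ /coset_imageP[g <-] [gq_in gm_notin]] := exists_prime_rel_order q_pr sTQ.
  by rewrite index_coset_stabilizer.
exists g; split; first exact: prime_gt0.
split=> [|m m_gt0 m_lt_q]; first by apply/memT; rewrite permX.
by move/memT; rewrite permX; apply/negP/gm_notin; rewrite m_gt0.
Qed.
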